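(* Let $L$ be the digraph with vertex set $\mathbb{Z}\times\{-1,0,1\}$ in which $((i,x),(j,y))$ is an edge if and only if $j=i+1$ and either $i$ is even, or $i$ is odd and $x+y\neq 0$. Let $\varphi^1,\varphi^2:V(L)\to\mathbb{Z}$ be given by $\varphi^1((i,x))=i$ and $\varphi^2((i,x))=i+1$; both are epimorphisms of $L$ onto the integer-line digraph $Z$. Let $D=L\,{}_{\varphi^1}\!\!\times_{\varphi^2}L$ be the layerwise direct product. Let $K_{3,3}$ be the complete bipartite digraph with all $9$ edges directed from its $3$ initial vertices to its $3$ terminal vertices, and let $AC_6$ be the alternating $6$-cycle, i.e. the bipartite digraph with initial vertices $u_{-1},u_0,u_1$, terminal vertices $w_{-1},w_0,w_1$ and an edge $(u_x,w_y)$ iff $x+y\neq 0$. Let $\psi^1:V(K_{3,3})\to\{0,1\}$ and $\psi^2:V(AC_6)\to\{0,1\}$ both map initial vertices to $0$ and terminal vertices to $1$, and let $K_{3,3}\,{}_{\psi^1}\!\!\times_{\psi^2}AC_6$ be the digraph with vertex set $\{(a,b)\in V(K_{3,3})\times V(AC_6)\mid \psi^1(a)=\psi^2(b)\}$ and edges $((a,b),(a',b'))$ whenever $(a,a')$ is an edge of $K_{3,3}$ and $(b,b')$ is an edge of $AC_6$. Then for every edge $e$ of $D$ the digraph $\Delta(e)$ is, up to isomorphism, independent of $e$, so that the associated digraph $\Delta(D)$ is well defined, and $$\Delta(D)\cong K_{3,3}\,{}_{\psi^1}\!\!\times_{\psi^2}AC_6,$$ and this digraph is connected, $1$-arc transitive,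 bipartite, but not complete bipartite.
   Context: The integer-line digraph is $Z=(\mathbb{Z},\{(i,i+1)\mid i\in\mathbb{Z}\})$. A digraph $G$ has Property $Z$ if there is an epimorphism (surjective digraph homomorphism) $\varphi:G\to Z$. For digraphs $G^1=(V^1,E^1)$, $G^2=(V^2,E^2)$ with epimorphisms $\varphi^1:G^1\to Z$, $\varphi^2:G^2\to Z$, the layerwise direct product $G^1\,{}_{\varphi^1}\!\!\times_{\varphi^2}G^2$ is the digraph with vertex set $\{(x,y)\mid x\in V^1,y\in V^2,\varphi^1(x)=\varphi^2(y)\}$ and edge set $\{((a,b),(x,y))\mid (a,x)\in E^1,(b,y)\in E^2\}$. An $n$-arc is a sequence of directed edges $e_0,\dots,e_{n-1}$ with the terminal vertex of $e_i$ equal to the initial vertex of $e_{i+1}$; a digraph is $n$-arc transitive if its automorphism group acts transitively on its (nonempty set of) $n$-arcs. An alternating walk is a sequence of edges $e_0,\dots,e_{n-1}$ in which consecutive edges alternately share their initial vertex and their terminal vertex (i.e. $e_i,e_{i+1}$ share initial vertex for all even $i$ and share terminal vertex for all odd $i$, or vice versa). Two edges are reachable from each other if some alternating walk contains both; this is an equivalence relation on edges. For an edge $e$, $\Delta(e)$ denotes the subgraph spanned by the reachability class of $e$; when these are all isomorphic, their common isomorphism type is called the associated digraph $\Delta(D)$. *)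

From Stdlib Require Import ZArith List Relations.
Import ListNotations.
Open Scope Z_scope.

(* A digraph: a carrier type, a vertex set (predicate) and an arc relation.
   All digraphs built below only have arcs between vertices of the vertex set. *)
Record digraph := Digraph {
  vt : Type;
  vset : vt -> Prop;
  arc : vt -> vt -> Prop }.

Definition hom (G H : digraph) (f : vt G -> vt H) : Prop :=
  (forall x, vset G x -> vset H (f x)) /\
  (forall x y, vset G x -> vset G y -> arc G x y -> arc H (f x) (f y)).

Definition epimorphism (G H : digraph) (f : vt G -> vt H) : Prop :=
  hom G H f /\ (forall y, vset H y -> exists x, vset G x /\ f x = y).

Definition iso_map (G H : digraph) (f : vt G -> vt H) : Prop :=
  (forall x, vset G x -> vset H (f x)) /\
  (forall x y, vset G x -> vset G y -> f x = f y -> x = y) /\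
  (forall y, vset H y -> exists x, vset G x /\ f x = y) /\
  (forall x y, vset G x -> vset G y -> (arc G x y <-> arc H (f x) (f y))).

Definition isomorphic (G H : digraph) : Prop := exists f, iso_map G H f.

Definition automorphism (G : digraph) (f : vt G -> vt G) : Prop := iso_map G G f.

Definition Zline : digraph := Digraph Z (fun _ => True) (fun i j => j = i + 1).

Definition lprod (G1 G2 : digraph) (C : Type) (f1 : vt G1 -> C) (f2 : vt G2 -> C)
  : digraph :=
  Digraph (vt G1 * vt G2)
    (fun p => vset G1 (fst p) /\ vset G2 (snd p) /\ f1 (fst p) = f2 (snd p))
    (fun p q =>
       (vset G1 (fst p) /\ vset G2 (snd p) /\ f1 (fst p) = f2 (snd p)) /\
       (vset G1 (fst q) /\ vset G2 (snd q) /\ f1 (fst q) = f2 (snd q)) /\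
       arc G1 (fst p) (fst q) /\ arc G2 (snd p) (snd q)).

Definition is_narc (G : digraph) (n : nat) (s : list (vt G)) : Prop :=
  length s = S n /\ (forall v, In v s -> vset G v) /\
  (forall i u v, nth_error s i = Some u -> nth_error s (S i) = Some v -> arc G u v).

Definition n_arc_transitive (G : digraph) (n : nat) : Prop :=
  (exists s, is_narc G n s) /\
  forall s t, is_narc G n s -> is_narc G n t ->
    exists f, automorphism G f /\ map f s = t.

(* Alternating walks: lists of arcs (as vertex pairs), consecutive arcs alternately
   sharing their initial and their terminal vertex. *)
Definition alt_walk (G : digraph) (w : list (vt G * vt G)) : Prop :=
  w <> [] /\
  (forall e, In e w -> vset G (fst e) /\ vset G (snd e) /\ arc G (fst e) (snd e)) /\
  exists b : bool,
    forall i e f, nth_error w i = Some e -> nth_error w (S i) = Some f ->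
      if xorb b (Nat.even i) then fst e = fst f else snd e = snd f.

Definition reachable (G : digraph) (e f : vt G * vt G) : Prop :=
  exists w, alt_walk G w /\ In e w /\ In f w.

Definition is_edge (G : digraph) (e : vt G * vt G) : Prop :=
  vset G (fst e) /\ vset G (snd e) /\ arc G (fst e) (snd e).

Definition Delta (G : digraph) (e : vt G * vt G) : digraph :=
  Digraph (vt G)
    (fun v => exists f, reachable G e f /\ (v = fst f \/ v = snd f))
    (fun x y => reachable G e (x, y)).

Definition connected (G : digraph) : Prop :=
  (exists v, vset G v) /\
  forall x y, vset G x -> vset G y ->
    clos_refl_trans (vt G) (fun a b => arc G a b \/ arc G b a) x y.

Definition bipartite (G : digraph) : Prop :=
  exists c : vt G -> bool,
    forall x y, vset G x -> vset G y -> arc G x y -> c x <> c y.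

Definition complete_bipartite (G : digraph) : Prop :=
  exists A B : vt G -> Prop,
    (forall v, vset G v -> (A v \/ B v) /\ ~ (A v /\ B v)) /\
    (forall x y, vset G x -> vset G y -> (arc G x y <-> A x /\ B y)).

Inductive T3 := Tm | T0 | Tp.
Definition t3z (x : T3) : Z := match x with Tm => -1 | T0 => 0 | Tp => 1 end.

Definition Ldg : digraph :=
  Digraph (Z * T3) (fun _ => True)
    (fun p q => fst q = fst p + 1 /\
       (Z.even (fst p) = true \/
        (Z.odd (fst p) = true /\ t3z (snd p) + t3z (snd q) <> 0))).

Definition phi1 (p : vt Ldg) : Z := fst p.
Definition phi2 (p : vt Ldg) : Z := fst p + 1.

Definition Ddg : digraph := lprod Ldg Ldg Z phi1 phi2.

(* K_{3,3} and AC_6 on vertices bool * T3 (false = initial, true = terminal) *)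
Definition K33 : digraph :=
  Digraph (bool * T3) (fun _ => True)
    (fun p q => fst p = false /\ fst q = true).

Definition AC6 : digraph :=
  Digraph (bool * T3) (fun _ => True)
    (fun p q => fst p = false /\ fst q = true /\ t3z (snd p) + t3z (snd q) <> 0).

Definition psi (p : bool * T3) : Z := if fst p then 1 else 0.

Definition KxAC : digraph := lprod K33 AC6 Z psi psi.

(* Every arc of D raises the level (the index of the first coordinate) by one, and consecutive
   arcs of an alternating walk share an endpoint, so an alternating walk stays inside one layer
   of arcs with a common initial level: Delta(e) lies in the layer of e.  The arcs of layer i are
   ((i,x),(i-1,y)) -> ((i+1,x'),(i,y')), and of the two L-arcs involved only the one leaving the
   odd level is constrained; so layer i is a copy of K33 x AC6, with the K33 label on the
   coordinate at the even level and the AC6 label on the other.  An explicit alternating walk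
   through all 54 arcs of K33 x AC6 shows that the whole layer is one reachability class.
   Arc-transitivity of K33 x AC6: permute the K33 labels freely on each side, and the AC6 labels
   by one permutation r of {-1,0,1}, applied as -r(-.) on terminal vertices. *)

From Stdlib Require Import ZArith List Relations Lia.
Import ListNotations.
Open Scope Z_scope.

Lemma iso_map_comp (G H K : digraph) f g :
  iso_map G H f -> iso_map H K g -> iso_map G K (fun x => g (f x)).
Proof.
  intros (F1 & F2 & F3 & F4) (G1 & G2 & G3 & G4). split; [|split; [|split]].
  - auto.
  - intros x y Hx Hy E. apply F2; auto.
  - intros z Hz. destruct (G3 z Hz) as (y & Hy & <-).
    destruct (F3 y Hy) as (x & Hx & <-). eauto.
  - intros x y Hx Hy. rewrite (F4 _ _ Hx Hy). apply G4; auto.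
Qed.

Lemma iso_map_inverse (G H : digraph) f g :
  iso_map G H f -> (forall x, vset G x -> g (f x) = x) -> iso_map H G g.
Proof.
  intros (Hv & _ & Hsurj & Harc) Hgf. split; [|split; [|split]].
  - intros y Hy. destruct (Hsurj y Hy) as (x & Hx & <-). rewrite Hgf; auto.
  - intros y1 y2 Hy1 Hy2 E.
    destruct (Hsurj y1 Hy1) as (x1 & Hx1 & <-), (Hsurj y2 Hy2) as (x2 & Hx2 & <-).
    rewrite !Hgf in E by assumption. now subst.
  - intros x Hx. exists (f x). auto.
  - intros y1 y2 Hy1 Hy2.
    destruct (Hsurj y1 Hy1) as (x1 & Hx1 & <-), (Hsurj y2 Hy2) as (x2 & Hx2 & <-).
    rewrite !Hgf by assumption. symmetry; auto.
Qed.

Definition adj (G : digraph) (x y : vt G) : Prop := arc G x y \/ arc G y x.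

Lemma clos_rt_sym (A : Type) (R : relation A) :
  (forall x y, R x y -> R y x) ->
  forall x y, clos_refl_trans A R x y -> clos_refl_trans A R y x.
Proof.
  intros HR x y H; induction H.
  - apply rt_step; auto.
  - apply rt_refl.
  - eapply rt_trans; eauto.
Qed.

Lemma connected_of_root (G : digraph) r :
  vset G r -> (forall x, vset G x -> clos_refl_trans (vt G) (adj G) x r) -> connected G.
Proof.
  intros Hr Hroot. split; [eauto|].
  intros x y Hx Hy. apply rt_trans with r; [now apply Hroot|].
  apply clos_rt_sym; [unfold adj; tauto | now apply Hroot].
Qed.

Lemma is_narc_1 (G : digraph) s :
  is_narc G 1 s <-> exists u v, s = [u; v] /\ is_edge G (u, v).
Proof.
  split.
  - intros (Hlen & Hv & Ha).
    destruct s as [|u [|v [|w s]]]; try discriminate.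
    exists u, v. split; [reflexivity|].
    repeat split; [apply Hv; cbn; tauto | apply Hv; cbn; tauto | exact (Ha 0%nat u v eq_refl eq_refl)].
  - intros (u & v & -> & Hu & Hv & Huv). split; [reflexivity|split].
    + intros w [<-|[<-|[]]]; assumption.
    + intros [|[|i]] x y Ex Ey; try discriminate.
      injection Ex as <-; injection Ey as <-; exact Huv.
Qed.

Lemma arc_transitive_of_edges (G : digraph) :
  (exists e, is_edge G e) ->
  (forall u v u' v', is_edge G (u, v) -> is_edge G (u', v') ->
     exists f, automorphism G f /\ f u = u' /\ f v = v') ->
  n_arc_transitive G 1.
Proof.
  intros [[u v] He] Htrans. split.
  - exists [u; v]. apply is_narc_1. eauto.
  - intros s t Hs Ht.
    apply is_narc_1 in Hs as (u1 & v1 & -> & H1), Ht as (u2 & v2 & -> & H2).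
    destruct (Htrans u1 v1 u2 v2 H1 H2) as (f & Hf & E1 & E2).
    exists f. split; [exact Hf|]. cbn. now rewrite E1, E2.
Qed.

Lemma alt_walk_map (G H : digraph) (f : vt G -> vt H) w :
  (forall x y, is_edge G (x, y) -> is_edge H (f x, f y)) ->
  alt_walk G w -> alt_walk H (map (fun e => (f (fst e), f (snd e))) w).
Proof.
  intros Hf (Hne & Hw & b & Halt). split; [|split].
  - destruct w; [contradiction | discriminate].
  - intros e' He'. apply in_map_iff in He' as (e & <- & He).
    exact (Hf _ _ (Hw e He)).
  - exists b. intros i e' g' Ee' Eg'. rewrite nth_error_map in Ee', Eg'.
    destruct (nth_error w i) as [e|] eqn:Ee; [|discriminate].
    destruct (nth_error w (S i)) as [g|] eqn:Eg; [|discriminate].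
    injection Ee' as <-; injection Eg' as <-. specialize (Halt i e g Ee Eg).
    destruct (xorb b (Nat.even i)); cbn; congruence.
Qed.

Lemma reachable_map (G H : digraph) (f : vt G -> vt H) e e' :
  (forall x y, is_edge G (x, y) -> is_edge H (f x, f y)) ->
  reachable G e e' -> reachable H (f (fst e), f (snd e)) (f (fst e'), f (snd e')).
Proof.
  intros Hf (w & Hw & He & He').
  exists (map (fun e => (f (fst e), f (snd e))) w). split; [now apply alt_walk_map|].
  split; apply in_map_iff; eauto.
Qed.

Lemma alt_walk_level (G : digraph) (phi : vt G -> Z) w :
  hom G Zline phi -> alt_walk G w ->
  forall e f, In e w -> In f w -> phi (fst e) = phi (fst f).
Proof.
  intros [_ Hhom] (Hne & Hw & b & Halt).
  assert (Hstep : forall i e g, nth_error w i = Some e -> nth_error w (S i) = Some g ->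
                    phi (fst g) = phi (fst e)).
  { intros i e g Ee Eg.
    destruct (Hw e (nth_error_In _ _ Ee)) as (He1 & He2 & He).
    destruct (Hw g (nth_error_In _ _ Eg)) as (Hg1 & Hg2 & Hg).
    pose proof (Hhom _ _ He1 He2 He); pose proof (Hhom _ _ Hg1 Hg2 Hg); cbn in *.
    specialize (Halt i e g Ee Eg).
    destruct (xorb b (Nat.even i)); rewrite Halt in *; lia. }
  destruct w as [|h w']; [contradiction|].
  assert (Hhead : forall n e, nth_error (h :: w') n = Some e -> phi (fst e) = phi (fst h)).
  { induction n as [|n IH]; intros e Ee.
    - now injection Ee as <-.
    - destruct (nth_error (h :: w') n) as [d|] eqn:Ed.
      + rewrite <- (IH d eq_refl). exact (Hstep n d e Ed Ee).
      + apply nth_error_None in Ed.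
        assert (nth_error (h :: w') (S n) = None) by (apply nth_error_None; lia).
        congruence. }
  intros e f He Hf.
  apply In_nth_error in He as (n & En), Hf as (m & Em).
  now rewrite (Hhead n e En), (Hhead m f Em).
Qed.

Lemma reachable_level (G : digraph) (phi : vt G -> Z) e f :
  hom G Zline phi -> reachable G e f -> is_edge G f /\ phi (fst f) = phi (fst e).
Proof.
  intros Hphi (w & Hw & He & Hf). split.
  - destruct Hw as (_ & Hedges & _). exact (Hedges f Hf).
  - exact (alt_walk_level G phi w Hphi Hw f e Hf He).
Qed.

Definition tneg (x : T3) : T3 := match x with Tm => Tp | T0 => T0 | Tp => Tm end.

Lemma tneg_involutive x : tneg (tneg x) = x.
Proof. now destruct x. Qed.

Lemma t3z_sum_neq0 x y : t3z x + t3z y <> 0 <-> x <> tneg y.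
Proof. destruct x, y; cbn; split; intro H; congruence. Qed.

Lemma t3_avoid y z : exists x : T3, x <> y /\ x <> z.
Proof.
  destruct y, z;
    first [ exists Tm; split; discriminate
          | exists T0; split; discriminate
          | exists Tp; split; discriminate ].
Qed.

Definition kx_in (a x : T3) : vt KxAC := ((false, a), (false, x)).
Definition kx_out (a y : T3) : vt KxAC := ((true, a), (true, y)).

Lemma KxAC_vsetE b a c x : vset KxAC ((b, a), (c, x)) <-> b = c.
Proof. destruct b, c; cbn; unfold psi; cbn; intuition discriminate. Qed.

Lemma KxAC_vertex_cases u :
  vset KxAC u -> (exists a x, u = kx_in a x) \/ (exists a y, u = kx_out a y).
Proof.
  destruct u as [[b a] [c x]]. intros ->%KxAC_vsetE.
  destruct c; [right | left]; do 2 eexists; reflexivity.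
Qed.

Lemma KxAC_arcE b a c x b' a' c' y :
  arc KxAC ((b, a), (c, x)) ((b', a'), (c', y)) <->
  b = false /\ c = false /\ b' = true /\ c' = true /\ x <> tneg y.
Proof.
  rewrite <- t3z_sum_neq0. cbn; unfold psi; cbn.
  destruct b, c, b', c'; cbn; intuition discriminate.
Qed.

Lemma KxAC_is_edge u v : is_edge KxAC (u, v) <-> arc KxAC u v.
Proof.
  split; [now intros (_ & _ & H) |].
  intros H. exact (conj (proj1 H) (conj (proj1 (proj2 H)) H)).
Qed.

Lemma KxAC_arc_in_out a x a' y : x <> tneg y -> arc KxAC (kx_in a x) (kx_out a' y).
Proof. intro H. now apply KxAC_arcE. Qed.

Lemma KxAC_arc_inv u v :
  arc KxAC u v -> exists a x a' y, u = kx_in a x /\ v = kx_out a' y /\ x <> tneg y.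
Proof.
  destruct u as [[b a] [c x]], v as [[b' a'] [c' y]].
  intros (-> & -> & -> & -> & H)%KxAC_arcE. now exists a, x, a', y.
Qed.

Lemma KxAC_out_nbr a x a' : exists y, arc KxAC (kx_in a x) (kx_out a' y).
Proof.
  destruct (t3_avoid (tneg x) (tneg x)) as (y & Hy & _).
  exists y. apply KxAC_arc_in_out. intros ->. apply Hy. now rewrite tneg_involutive.
Qed.

Lemma KxAC_common_in a y a' z :
  exists x, arc KxAC (kx_in T0 x) (kx_out a y) /\ arc KxAC (kx_in T0 x) (kx_out a' z).
Proof.
  destruct (t3_avoid (tneg y) (tneg z)) as (x & Hy & Hz).
  exists x. split; now apply KxAC_arc_in_out.
Qed.

Lemma KxAC_connected : connected KxAC.
Proof.
  assert (Hout : forall a y, clos_refl_trans _ (adj KxAC) (kx_out a y) (kx_out T0 T0)).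
  { intros a y. destruct (KxAC_common_in a y T0 T0) as (x & H1 & H2).
    apply rt_trans with (kx_in T0 x); apply rt_step; [right | left]; assumption. }
  apply connected_of_root with (kx_out T0 T0); [now apply KxAC_vsetE|].
  intros u Hu. destruct (KxAC_vertex_cases u Hu) as [(a & x & ->) | (a & y & ->)].
  - destruct (KxAC_out_nbr a x T0) as (y & H).
    apply rt_trans with (kx_out T0 y); [apply rt_step; left; exact H | apply Hout].
  - apply Hout.
Qed.

Lemma KxAC_bipartite : bipartite KxAC.
Proof.
  exists (fun p => fst (fst p)). intros u v _ _ H.
  apply KxAC_arc_inv in H as (a & x & a' & y & -> & -> & _). discriminate.
Qed.

Lemma KxAC_not_complete_bipartite : ~ complete_bipartite KxAC.
Proof.
  intros (A & B & _ & Hcb).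
  assert (Hv : forall b a x, vset KxAC ((b, a), (b, x))) by (intros; now apply KxAC_vsetE).
  assert (H1 : A (kx_in T0 Tp)).
  { apply (Hcb _ (kx_out T0 Tp)); try apply Hv. apply KxAC_arc_in_out; discriminate. }
  assert (H2 : B (kx_out T0 Tm)).
  { apply (Hcb (kx_in T0 T0)); try apply Hv. apply KxAC_arc_in_out; discriminate. }
  assert (H : arc KxAC (kx_in T0 Tp) (kx_out T0 Tm)) by (apply Hcb; try apply Hv; split; assumption).
  apply KxAC_arcE in H as (_ & _ & _ & _ & Hneq).
  now apply Hneq.
Qed.

Definition t3_bij (r r' : T3 -> T3) : Prop :=
  (forall x, r' (r x) = x) /\ (forall x, r (r' x) = x).

Definition T3_eq_dec (x y : T3) : {x = y} + {x <> y}.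
Proof. decide equality. Defined.

Definition t3_third (x y : T3) : T3 :=
  match x, y with
  | Tm, T0 | T0, Tm => Tp
  | Tm, Tp | Tp, Tm => T0
  | _, _ => Tm
  end.

Definition t3_perm (x z x2 z2 p : T3) : T3 :=
  if T3_eq_dec p x then x2 else if T3_eq_dec p z then z2 else t3_third x2 z2.

Lemma t3_bij_pairs x z x2 z2 :
  x <> z -> x2 <> z2 -> exists r r', t3_bij r r' /\ r x = x2 /\ r z = z2.
Proof.
  intros Hxz Hxz2. exists (t3_perm x z x2 z2), (t3_perm x2 z2 x z).
  destruct x, z; try congruence; destruct x2, z2; try congruence;
    repeat split; try (intro p; destruct p); reflexivity.
Qed.

Lemma t3_bij_one x x2 : exists r r', t3_bij r r' /\ r x = x2.
Proof.
  destruct (t3_avoid x x) as (z & Hz & _), (t3_avoid x2 x2) as (z2 & Hz2 & _).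
  destruct (t3_bij_pairs x z x2 z2) as (r & r' & Hr & Hx & _); eauto.
Qed.

(* Conjugating [r] by [tneg] on terminal vertices preserves the AC6 arc relation [x <> tneg y]. *)
Definition kx_map (s t r : T3 -> T3) (p : vt KxAC) : vt KxAC :=
  let '((b, a), (c, x)) := p in
  ((b, if b then t a else s a), (c, if c then tneg (r (tneg x)) else r x)).

Lemma kx_map_cancel s s' t t' r r' :
  t3_bij s s' -> t3_bij t t' -> t3_bij r r' ->
  forall p, kx_map s' t' r' (kx_map s t r p) = p.
Proof.
  intros [Hs _] [Ht _] [Hr _] [[b a] [c x]].
  destruct b, c; cbn; now rewrite ?Hs, ?Ht, ?tneg_involutive, ?Hr, ?tneg_involutive.
Qed.

Lemma t3_bij_sym r r' : t3_bij r r' -> t3_bij r' r.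
Proof. now intros []. Qed.

Lemma kx_map_automorphism s s' t t' r r' :
  t3_bij s s' -> t3_bij t t' -> t3_bij r r' -> automorphism KxAC (kx_map s t r).
Proof.
  intros Hs Ht Hr.
  pose proof (kx_map_cancel _ _ _ _ _ _ Hs Ht Hr) as K.
  pose proof (kx_map_cancel _ _ _ _ _ _ (t3_bij_sym _ _ Hs) (t3_bij_sym _ _ Ht)
                (t3_bij_sym _ _ Hr)) as K'.
  split; [|split; [|split]].
  - intros [[b a] [c x]] Hp. now apply KxAC_vsetE in Hp as ->; apply KxAC_vsetE.
  - intros p q _ _ E. now rewrite <- (K p), <- (K q), E.
  - intros q Hq. exists (kx_map s' t' r' q). split; [|apply K'].
    destruct q as [[b a] [c x]]. now apply KxAC_vsetE in Hq as ->; apply KxAC_vsetE.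
  - intros [[b a] [c x]] [[b' a'] [c' y]] _ _. cbn [kx_map]. rewrite !KxAC_arcE.
    assert (Hrinj : forall u v, r u = r v <-> u = v).
    { destruct Hr as [Hr _]. split; [|now intros ->].
      intro E. now rewrite <- (Hr u), E, Hr. }
    destruct b, c, b', c'; try (intuition discriminate).
    rewrite tneg_involutive. split; intros (_ & _ & _ & _ & H); repeat split;
      intro E; apply H; [apply Hrinj | apply Hrinj in E]; assumption.
Qed.

Lemma KxAC_arc_transitive : n_arc_transitive KxAC 1.
Proof.
  apply arc_transitive_of_edges.
  { exists (kx_in T0 T0, kx_out T0 Tp). apply KxAC_is_edge, KxAC_arc_in_out. discriminate. }
  intros u v u' v' H%KxAC_is_edge H'%KxAC_is_edge.
  apply KxAC_arc_inv in H as (a & x & b & y & -> & -> & Hxy).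
  apply KxAC_arc_inv in H' as (a' & x' & b' & y' & -> & -> & Hxy').
  destruct (t3_bij_one a a') as (s & s' & Hs & Hsa).
  destruct (t3_bij_one b b') as (t & t' & Ht & Htb).
  destruct (t3_bij_pairs x (tneg y) x' (tneg y') Hxy Hxy') as (r & r' & Hr & Hrx & Hry).
  exists (kx_map s t r). split; [exact (kx_map_automorphism _ _ _ _ _ _ Hs Ht Hr)|].
  cbn. now rewrite Hsa, Htb, Hrx, Hry, tneg_involutive.
Qed.

Lemma Ldg_arcE i x j y :
  arc Ldg (i, x) (j, y) <-> j = i + 1 /\ (Z.odd i = true -> t3z x + t3z y <> 0).
Proof.
  cbn. rewrite <- Z.negb_even. destruct (Z.even i); cbn; intuition discriminate.
Qed.

Definition level (v : vt Ddg) : Z := phi1 (fst v).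

Lemma Ddg_level_hom : hom Ddg Zline level.
Proof.
  split; [now intros|].
  intros [[i x] q] [[j y] q'] _ _ (_ & _ & Ha & _). apply Ldg_arcE in Ha as [-> _].
  reflexivity.
Qed.

Lemma Ddg_is_edgeE i x k y j x' l y' :
  is_edge Ddg (((i, x), (k, y)), ((j, x'), (l, y'))) <->
  k = i - 1 /\ j = i + 1 /\ l = i /\
  (Z.odd i = true -> t3z x + t3z x' <> 0) /\ (Z.even i = true -> t3z y + t3z y' <> 0).
Proof.
  unfold is_edge; cbn -[Z.add Z.sub Ldg]. unfold phi1, phi2; cbn -[Z.add Z.sub Ldg].
  rewrite !Ldg_arcE. split.
  - intros (_ & _ & (_ & _ & Hk) & (_ & _ & Hl) & [Hj Hx] & [_ Hy]).
    assert (k = i - 1) by lia. subst k.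
    rewrite Z.sub_1_r, Z.odd_pred in Hy. repeat split; auto; lia.
  - intros (-> & -> & -> & Hx & Hy). rewrite Z.sub_1_r, Z.odd_pred.
    repeat split; auto; lia.
Qed.

(* In layer [i] only the L-arc leaving the odd one of the levels [i], [i-1] is constrained:
   that coordinate carries the AC6 label, the other one the K33 label. *)
Definition layer_emb (i : Z) (u : vt KxAC) : vt Ddg :=
  let '((b, a), (_, x)) := u in
  let k := if b then i + 1 else i in
  if Z.even i then ((k, a), (k - 1, x)) else ((k, x), (k - 1, a)).

Definition layer_proj (i : Z) (v : vt Ddg) : vt KxAC :=
  let '((k, p), (_, q)) := v in
  let b := (k =? i + 1) in
  if Z.even i then ((b, p), (b, q)) else ((b, q), (b, p)).

Lemma layer_proj_emb i u : vset KxAC u -> layer_proj i (layer_emb i u) = u.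
Proof.
  destruct u as [[b a] [c x]]. intros <-%KxAC_vsetE.
  assert (Hi : (i =? i + 1) = false) by (apply Z.eqb_neq; lia).
  unfold layer_emb, layer_proj.
  destruct b, (Z.even i); rewrite ?Hi, ?Z.eqb_refl; reflexivity.
Qed.

Lemma layer_emb_inj i u v :
  vset KxAC u -> vset KxAC v -> layer_emb i u = layer_emb i v -> u = v.
Proof.
  intros Hu Hv E. now rewrite <- (layer_proj_emb i u Hu), <- (layer_proj_emb i v Hv), E.
Qed.

Lemma layer_emb_edge i u v :
  arc KxAC u v -> is_edge Ddg (layer_emb i u, layer_emb i v) /\ level (layer_emb i u) = i.
Proof.
  intros (a & x & a' & y & -> & -> & Hxy)%KxAC_arc_inv. apply t3z_sum_neq0 in Hxy.
  pose proof (Z.negb_even i) as Hodd. unfold layer_emb.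
  destruct (Z.even i) eqn:E; (split; [|reflexivity]);
    apply Ddg_is_edgeE; rewrite <- Hodd, E; repeat split; try lia; easy.
Qed.

Lemma Ddg_edge_emb g :
  is_edge Ddg g ->
  exists u v, arc KxAC u v /\ g = (layer_emb (level (fst g)) u, layer_emb (level (fst g)) v).
Proof.
  destruct g as [[[i x] [k y]] [[j x'] [l y']]].
  intros (-> & -> & -> & Hx & Hy)%Ddg_is_edgeE. unfold level, phi1; cbn [fst].
  pose proof (Z.negb_even i) as Hodd. unfold layer_emb.
  assert (Hi : i + 1 - 1 = i) by lia.
  destruct (Z.even i) eqn:E.
  - exists (kx_in x y), (kx_out x' y'). split.
    + apply KxAC_arc_in_out, t3z_sum_neq0; auto.
    + cbn -[Z.add Z.sub]. now rewrite Hi.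
  - exists (kx_in y x), (kx_out y' x'). split.
    + apply KxAC_arc_in_out, t3z_sum_neq0, Hx. now rewrite <- Hodd.
    + cbn -[Z.add Z.sub]. now rewrite Hi.
Qed.

Definition kx_edge (a x a' y : T3) : vt KxAC * vt KxAC := (kx_in a x, kx_out a' y).

Definition KxAC_tour : list (vt KxAC * vt KxAC) :=
  [kx_edge Tm Tm Tp T0; kx_edge Tp Tp Tp T0; kx_edge Tp Tp Tp Tp;
   kx_edge Tp T0 Tp Tp; kx_edge Tp T0 Tp Tm; kx_edge Tp Tm Tp Tm;
   kx_edge Tp Tm T0 T0; kx_edge Tp Tp T0 T0; kx_edge Tp Tp T0 Tp;
   kx_edge Tp T0 T0 Tp; kx_edge Tp T0 T0 Tm; kx_edge Tp Tm T0 Tm;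
   kx_edge Tp Tm Tm T0; kx_edge Tp Tp Tm T0; kx_edge Tp Tp Tm Tp;
   kx_edge Tp T0 Tm Tp; kx_edge Tp T0 Tm Tm; kx_edge Tp Tm Tm Tm;
   kx_edge Tp Tm Tp T0; kx_edge T0 Tp Tp T0; kx_edge T0 Tp Tp Tp;
   kx_edge T0 T0 Tp Tp; kx_edge T0 T0 Tp Tm; kx_edge T0 Tm Tp Tm;
   kx_edge T0 Tm T0 T0; kx_edge T0 Tp T0 T0; kx_edge T0 Tp T0 Tp;
   kx_edge T0 T0 T0 Tp; kx_edge T0 T0 T0 Tm; kx_edge T0 Tm T0 Tm;
   kx_edge T0 Tm Tm T0; kx_edge T0 Tp Tm T0; kx_edge T0 Tp Tm Tp;
   kx_edge T0 T0 Tm Tp; kx_edge T0 T0 Tm Tm; kx_edge T0 Tm Tm Tm;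
   kx_edge T0 Tm Tp T0; kx_edge Tm Tp Tp T0; kx_edge Tm Tp Tp Tp;
   kx_edge Tm T0 Tp Tp; kx_edge Tm T0 Tp Tm; kx_edge Tm Tm Tp Tm;
   kx_edge Tm Tm T0 T0; kx_edge Tm Tp T0 T0; kx_edge Tm Tp T0 Tp;
   kx_edge Tm T0 T0 Tp; kx_edge Tm T0 T0 Tm; kx_edge Tm Tm T0 Tm;
   kx_edge Tm Tm Tm T0; kx_edge Tm Tp Tm T0; kx_edge Tm Tp Tm Tp;
   kx_edge Tm T0 Tm Tp; kx_edge Tm T0 Tm Tm; kx_edge Tm Tm Tm Tm].

Lemma KxAC_tour_alt_walk : alt_walk KxAC KxAC_tour.
Proof.
  split; [discriminate | split].
  - intros e He.
    repeat (destruct He as [<- | He]; [apply KxAC_is_edge, KxAC_arc_in_out; discriminate |]).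
    destruct He.
  - exists true. intros i e f.
    do 53 (destruct i as [|i];
           [intros E F; cbn in E, F; injection E as <-; injection F as <-; reflexivity |]).
    intros _ F. destruct i; discriminate.
Qed.

Lemma KxAC_tour_complete e : is_edge KxAC e -> In e KxAC_tour.
Proof.
  destruct e as [u v]. intros (a & x & a' & y & -> & -> & H)%KxAC_is_edge%KxAC_arc_inv.
  destruct a, x, a', y; try (now elim H); cbn; repeat first [left; reflexivity | right].
Qed.

Lemma KxAC_reachable e f : is_edge KxAC e -> is_edge KxAC f -> reachable KxAC e f.
Proof.
  intros He Hf. exists KxAC_tour.
  split; [exact KxAC_tour_alt_walk | split; now apply KxAC_tour_complete].
Qed.

Lemma Ddg_reachableE e g :
  is_edge Ddg e ->
  reachable Ddg e g <-> is_edge Ddg g /\ level (fst g) = level (fst e).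
Proof.
  intros He. split; [apply reachable_level, Ddg_level_hom|].
  intros [Hg Hlev].
  destruct (Ddg_edge_emb e He) as (u & v & Huv & Ee).
  destruct (Ddg_edge_emb g Hg) as (u' & v' & Huv' & Eg).
  rewrite Hlev in Eg. rewrite Eg, Ee at 1.
  apply (reachable_map KxAC Ddg (layer_emb (level (fst e))) (u, v) (u', v')).
  - intros x y Hxy%KxAC_is_edge. exact (proj1 (layer_emb_edge _ x y Hxy)).
  - apply KxAC_reachable; now apply KxAC_is_edge.
Qed.

Lemma KxAC_vertex_on_arc u : vset KxAC u -> exists w, arc KxAC u w \/ arc KxAC w u.
Proof.
  intros [(a & x & ->) | (a & y & ->)]%KxAC_vertex_cases.
  - destruct (KxAC_out_nbr a x T0) as (y & H). eauto.
  - destruct (KxAC_common_in a y a y) as (x & H & _). eauto.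
Qed.

Lemma Delta_Ddg_iso e :
  is_edge Ddg e -> iso_map KxAC (Delta Ddg e) (layer_emb (level (fst e))).
Proof.
  intros He. set (i := level (fst e)).
  assert (Hreach : forall u v, arc KxAC u v -> reachable Ddg e (layer_emb i u, layer_emb i v)).
  { intros u v Huv. destruct (layer_emb_edge i u v Huv) as [Hg Hl].
    now apply Ddg_reachableE. }
  split; [|split; [|split]].
  - intros u Hu. destruct (KxAC_vertex_on_arc u Hu) as (w & [H | H]).
    + exists (layer_emb i u, layer_emb i w). split; [now apply Hreach | now left].
    + exists (layer_emb i w, layer_emb i u). split; [now apply Hreach | now right].
  - apply layer_emb_inj.
  - intros z (f & Hf & Hz). apply Ddg_reachableE in Hf as [Hf Hl]; [|exact He].
    destruct (Ddg_edge_emb f Hf) as (u & v & Huv & Ef).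
    rewrite Hl in Ef. rewrite Ef in Hz.
    apply KxAC_is_edge in Huv as (Hu & Hv & _).
    destruct Hz as [-> | ->]; eauto.
  - intros u v Hu Hv. split; [apply Hreach|].
    intros (Hg & Hl)%Ddg_reachableE; [|exact He].
    destruct (Ddg_edge_emb _ Hg) as (u' & v' & Huv' & E). cbn in Hl, E.
    rewrite Hl in E. injection E as Eu Ev.
    pose proof (proj2 (KxAC_is_edge u' v') Huv') as (Hu' & Hv' & _).
    rewrite (layer_emb_inj i u u' Hu Hu' Eu), (layer_emb_inj i v v' Hv Hv' Ev).
    exact Huv'.
Qed.

Lemma Ldg_phi1_epi : epimorphism Ldg Zline phi1.
Proof.
  split; [split|].
  - now intros.
  - intros [i x] [j y] _ _ [-> _]%Ldg_arcE. reflexivity.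
  - intros k _. now exists (k, T0).
Qed.

Lemma Ldg_phi2_epi : epimorphism Ldg Zline phi2.
Proof.
  split; [split|].
  - now intros.
  - intros [i x] [j y] _ _ [-> _]%Ldg_arcE. reflexivity.
  - intros k _. exists (k - 1, T0). split; [exact I | unfold phi2; cbn; lia].
Qed.

Theorem mainTheorem1 :
  epimorphism Ldg Zline phi1 /\ epimorphism Ldg Zline phi2 /\
  (forall e1 e2 : vt Ddg * vt Ddg, is_edge Ddg e1 -> is_edge Ddg e2 ->
     isomorphic (Delta Ddg e1) (Delta Ddg e2)) /\
  (forall e : vt Ddg * vt Ddg, is_edge Ddg e -> isomorphic (Delta Ddg e) KxAC) /\
  connected KxAC /\ n_arc_transitive KxAC 1 /\ bipartite KxAC /\
  ~ complete_bipartite KxAC.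
Proof.
  assert (Hproj : forall e, is_edge Ddg e ->
                    iso_map (Delta Ddg e) KxAC (layer_proj (level (fst e)))).
  { intros e He. apply (iso_map_inverse _ _ _ _ (Delta_Ddg_iso e He)), layer_proj_emb. }
  split; [exact Ldg_phi1_epi|]. split; [exact Ldg_phi2_epi|].
  split; [|split; [|split; [|split; [|split]]]].
  - intros e1 e2 H1 H2. eexists.
    exact (iso_map_comp _ _ _ _ _ (Hproj e1 H1) (Delta_Ddg_iso e2 H2)).
  - intros e He. eexists. exact (Hproj e He).
  - exact KxAC_connected.
  - exact KxAC_arc_transitive.
  - exact KxAC_bipartite.
  - exact KxAC_not_complete_bipartite.
Qed.
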